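(* Let $\varepsilon\in[0,1)$ and $\mathcal{P},\mathcal{E}\subseteq\mathcal{D}(P)$. Then $$\beta\overline{C}_{\mathrm{GPO},\varepsilon}(\mathcal{P},\mathcal{E})=D^{\mathcal{E}}_{\max,\varepsilon}(\mathcal{P}\|\mathcal{E}).$$
   Context: All Hilbert spaces are finite-dimensional; $\mathcal{D}(P)$ is the set of density operators on $P$; $T(X,Y)=\tfrac12\|X-Y\|_1$; $\mathcal{B}_\varepsilon(\mathcal{P})=\{\omega\in\mathcal{D}:T(\omega,\rho)\le\varepsilon\text{ for some }\rho\in\mathcal{P}\}$. Battery: qubit $B$ with basis $\{|0\rangle,|1\rangle\}$, $\pi_M=(1-\tfrac1M)|0\rangle\langle0|+\tfrac1M|1\rangle\langle1|$ for $M>1$, $\Pi_M=\{\pi_{M'}:M'\in[M,\infty)\}$. The one-shot work cost from a dirty battery under a class $\mathfrak{F}$ is $\beta\overline{C}_{\mathfrak{F},\varepsilon}(\mathcal{P},\mathcal{E})=\log\inf\{M>1:\exists\mathcal{F}\in\mathfrak{F}\text{ with } T(\mathcal{F}(|1\rangle\langle1|),\rho)\le\varepsilon\text{ for some }\rho\in\mathcal{P}\text{ and }\mathcal{F}(\sigma)\in\mathcal{E}\ \forall\sigma\in\Pi_M\}$; GPO here means the class of CPTP maps from $B$ to $P$, Gibbs preservation being the condition $\mathcal{F}(\Pi_M)\subseteq\mathcal{E}$. For $\mathcal{K}\subseteq\mathcal{D}$, with $\operatorname{cl}(\mathcal{K})$ its closure and $\mathcal{C}(\gamma,\omega,1/M)=\{(1-\lambda)\gamma+\lambda\omega:\lambda\in(0,1/M]\}$,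 the subspace-constrained max-relative entropy is $D^{\mathcal{K}}_{\max,\varepsilon}(\mathcal{P}\|\mathcal{E})=\log\inf\{M>1:\gamma\in\operatorname{cl}(\mathcal{K}),\ \omega\in\mathcal{B}_\varepsilon(\mathcal{P}),\ \mathcal{C}(\gamma,\omega,1/M)\subseteq\mathcal{E}\}$ (with $\log\inf\emptyset=+\infty$). *)

From mathcomp Require Import all_boot all_order all_algebra.
From mathcomp Require Import complex.
From mathcomp Require Import all_classical all_reals all_analysis.

Set Implicit Arguments.
Unset Strict Implicit.
Unset Printing Implicit Defensive.

Import Order.TTheory GRing.Theory Num.Theory.
Local Open Scope ring_scope.
Local Open Scope classical_set_scope.
Local Open Scope sesquilinear_scope.

Definition rc {R : realType} (x : R) : R[i] := Complex x 0.

Definition adjm {R : realType} {m n : nat} (A : 'M[R[i]]_(m, n)) : 'M[R[i]]_(n, m) :=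
  A ^t*.

Definition psd {R : realType} {m : nat} (A : 'M[R[i]]_m) : Prop :=
  adjm A = A /\ forall v : 'cV[R[i]]_m, 0 <= (adjm v *m A *m v) 0 0.

Definition density {R : realType} {n : nat} (A : 'M[R[i]]_n) : Prop :=
  psd A /\ \tr A = 1.

(** T(X,Y) <= e, where T(X,Y) = 1/2 ||X - Y||_1.  For Hermitian X - Y the trace
    norm is the sum of the absolute values of the eigenvalues, i.e. of the real
    diagonal entries of a unitary diagonalisation X - Y = U^* diag(d) U
    (the multiset of eigenvalues is unique, so "there exists" is the same as
    "for all" such decompositions). *)
Definition trdist_le {R : realType} {n : nat} (X Y : 'M[R[i]]_n) (e : R) : Prop :=
  exists (U : 'M[R[i]]_n) (d : 'rV[R]_n),
    U \is unitarymx /\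
    X - Y = adjm U *m diag_mx (map_mx rc d) *m U /\
    (\sum_i `|d 0 i|) / 2 <= e.

Definition eps_ball {R : realType} {n : nat} (Pset : set 'M[R[i]]_n) (e : R)
  : set 'M[R[i]]_n :=
  [set w | density w /\ exists r, Pset r /\ trdist_le w r e].

(** closure of a set of density operators (trace-norm topology; all norms are
    equivalent in finite dimension) *)
Definition dcl {R : realType} {n : nat} (K : set 'M[R[i]]_n) : set 'M[R[i]]_n :=
  [set g | density g /\ forall d : R, 0 < d -> exists k, K k /\ trdist_le g k d].

Definition ket1 {R : realType} : 'M[R[i]]_2 := delta_mx (1 : 'I_2) (1 : 'I_2).

Definition piM {R : realType} (M : R) : 'M[R[i]]_2 :=
  diag_mx (\row_(i < 2) rc (if i == ord0 then 1 - M^-1 else M^-1)).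

(** complete positivity: id_k (x) F maps PSD operators on C^k (x) C^2 to PSD
    operators, for every k.  An operator on C^k (x) C^2 is a k x k block matrix
    with 2 x 2 blocks X i j, and (id_k (x) F) acts blockwise. *)
Definition CP {R : realType} {n : nat} (F : 'M[R[i]]_2 -> 'M[R[i]]_n) : Prop :=
  forall (k : nat) (X : 'I_k -> 'I_k -> 'M[R[i]]_2),
    psd (@mxblock _ k k (fun _ => 2%N) (fun _ => 2%N) X) ->
    psd (@mxblock _ k k (fun _ => n) (fun _ => n) (fun i j => F (X i j))).

Definition CPTP {R : realType} {n : nat} (F : 'M[R[i]]_2 -> 'M[R[i]]_n) : Prop :=
  linear F /\ (forall X, \tr (F X) = \tr X) /\ CP F.

(** log inf S, with log inf (emptyset) = +oo (natural log; the base is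
    immaterial for the equality) *)
Definition log_inf {R : realType} (S : set R) : \bar R :=
  if `[< S !=set0 >] then ((ln (inf S))%:E)%E else (+oo)%E.

Definition work_cost_GPO {R : realType} {n : nat} (Pset Eset : set 'M[R[i]]_n)
  (e : R) : \bar R :=
  log_inf [set M : R | 1 < M /\
    exists F : 'M[R[i]]_2 -> 'M[R[i]]_n, CPTP F /\
      (exists r, Pset r /\ trdist_le (F ket1) r e) /\
      (forall M' : R, M <= M' -> Eset (F (piM M')))].

Definition Dmax_K {R : realType} {n : nat} (K Pset Eset : set 'M[R[i]]_n)
  (e : R) : \bar R :=
  log_inf [set M : R | 1 < M /\
    exists g w, dcl K g /\ eps_ball Pset e w /\
      (forall l : R, 0 < l <= M^-1 -> Eset (rc (1 - l) *: g + rc l *: w))].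

From mathcomp Require Import all_boot all_order all_algebra.
From mathcomp Require Import complex.
From mathcomp Require Import all_classical all_reals all_analysis.
From mathcomp Require Import ring lra.
Import Order.TTheory GRing.Theory Num.Theory.
Local Open Scope ring_scope.
Local Open Scope classical_set_scope.
Local Open Scope sesquilinear_scope.

(* A GPO channel F is determined on the relevant inputs by g = F |0><0| and
   w = F |1><1|: by linearity F (pi_M') = (1 - 1/M') g + (1/M') w, so Gibbs
   preservation on Pi_M is exactly the cone condition for l = 1/M' in (0, 1/M],
   and g lies in the closure of E since these mixtures are l T(g, w)-close to
   g.  Conversely, the measure-and-prepare channel X |-> X00 g + X11 w is CPTP
   (blockwise it is a Schur-type product of positive matrices), sends |1><1| to
   w and pi_M' to the mixture of weight 1/M'.  Hence the two sets of admissible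
   M coincide, for arbitrary e, P and E. *)

Section GPOWorkCost.
Set Implicit Arguments.
Unset Strict Implicit.
Context {R : realType}.
Local Notation C := R[i].

Lemma adjmE m n (A : 'M[C]_(m, n)) i j : adjm A i j = (A j i)^*.
Proof. by rewrite !mxE. Qed.

Lemma adjmK m n (A : 'M[C]_(m, n)) : adjm (adjm A) = A.
Proof. exact: trmxCK. Qed.

Lemma adjmM m n p (A : 'M[C]_(m, n)) (B : 'M[C]_(n, p)) :
  adjm (A *m B) = adjm B *m adjm A.
Proof. by rewrite /adjm trmx_mul map_mxM. Qed.

Lemma adjmD m n (A B : 'M[C]_(m, n)) : adjm (A + B) = adjm A + adjm B.
Proof. by apply/matrixP => i j; rewrite !mxE rmorphD. Qed.

Lemma adjmB m n (A B : 'M[C]_(m, n)) : adjm (A - B) = adjm A - adjm B.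
Proof. by apply/matrixP => i j; rewrite !mxE rmorphB. Qed.

Lemma adjmZ m n (s : C) (A : 'M[C]_(m, n)) : adjm (s *: A) = s^* *: adjm A.
Proof. by apply/matrixP => i j; rewrite !mxE rmorphM. Qed.

Lemma adjm_delta m n (i : 'I_m) (j : 'I_n) :
  adjm (delta_mx i j : 'M[C]_(m, n)) = delta_mx j i.
Proof. by rewrite /adjm trmx_delta map_delta_mx. Qed.

Lemma quad_formE m (A : 'M[C]_m) (u v : 'cV[C]_m) :
  (adjm u *m A *m v) 0 0 = \sum_i \sum_j (u i 0)^* * A i j * v j 0.
Proof.
rewrite !mxE exchange_big /=; apply: eq_bigr => i _.
by rewrite !mxE mulr_suml; apply: eq_bigr => j _; rewrite adjmE.
Qed.

Lemma quad_form_delta m (A : 'M[C]_m) (a : 'I_m) (s t : C) :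
  let e_a : 'cV[C]_m := delta_mx a 0 in
  (adjm (s *: e_a) *m A *m (t *: e_a)) 0 0 = s^* * A a a * t.
Proof.
rewrite /= adjmZ adjm_delta -scalemxAl -scalemxAr -scalemxAl.
by rewrite -rowE -colE !mxE mulrC.
Qed.

Lemma quad_form_mxblock k m (B : 'I_k -> 'I_k -> 'M[C]_m)
    (c : 'I_k -> 'cV[C]_m) :
  (adjm (\mxcol_i c i) *m \mxblock_(i, j) B i j *m \mxcol_i c i) 0 0
  = \sum_i \sum_j (adjm (c i) *m B i j *m c j) 0 0.
Proof.
have -> : adjm (\mxcol_i c i) = \mxrow_i adjm (c i).
  by apply/matrixP => i j; rewrite !mxE.
rewrite mul_mxrow_mxblock mul_mxrow_mxcol summxE exchange_big /=.
by apply: eq_bigr => j _; rewrite mulmx_suml summxE.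
Qed.

Lemma psd_mxblockP k m (B : 'I_k -> 'I_k -> 'M[C]_m) :
  psd (\mxblock_(i, j) B i j) <->
  (forall i j, adjm (B i j) = B j i) /\
  (forall c : 'I_k -> 'cV[C]_m,
     0 <= \sum_i \sum_j (adjm (c i) *m B i j *m c j) 0 0).
Proof.
have adjm_block : adjm (\mxblock_(i, j) B i j) = \mxblock_(i, j) adjm (B j i).
  by apply/matrixP => i j; rewrite !mxE.
rewrite /psd adjm_block; split=> [[hermB qfB] | [hermB qfB]]; split.
- move=> i j; have := congr1 (fun X => submxblock X j i) hermB.
  by rewrite !mxblockK.
- by move=> c; rewrite -quad_form_mxblock.
- by apply: eq_mxblock => i j; rewrite hermB.
- by move=> v; rewrite -(submxcolK v) quad_form_mxblock.
Qed.

Lemma psdD m (A B : 'M[C]_m) : psd A -> psd B -> psd (A + B).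
Proof.
case=> [hermA qfA] [hermB qfB]; split; first by rewrite adjmD hermA hermB.
by move=> v; rewrite mulmxDr mulmxDl mxE addr_ge0.
Qed.

Lemma psd_gram p m (W : 'M[C]_(p, m)) : psd (adjm W *m W).
Proof.
split; first by rewrite adjmM adjmK.
move=> v; rewrite mulmxA -adjmM -mulmxA mxE.
by apply: sumr_ge0 => x _; rewrite adjmE mulrC mul_conjC_ge0.
Qed.

Lemma psd_delta m (a : 'I_m) : psd (delta_mx a a : 'M[C]_m).
Proof.
by rewrite -(mul_delta_mx (0 : 'I_1)) -adjm_delta; apply: psd_gram.
Qed.

Lemma psd_mxblock1 m (A : 'M[C]_m) :
  psd A <-> psd (\mxblock_(i < 1, j < 1) A).
Proof.
rewrite psd_mxblockP; split=> [[hermA qfA] | [hermA qfA]]; split.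
- by move=> i j; rewrite hermA.
- by move=> c; rewrite !big_ord1.
- exact: (hermA 0 0).
- by move=> v; have := qfA (fun _ => v); rewrite !big_ord1.
Qed.

Lemma CP_psd n (F : 'M[C]_2 -> 'M[C]_n) A : CP F -> psd A -> psd (F A).
Proof. by move=> CPF /psd_mxblock1 psdA; apply/psd_mxblock1/(CPF 1%N). Qed.

Lemma CPTP_density n (F : 'M[C]_2 -> 'M[C]_n) A :
  CPTP F -> density A -> density (F A).
Proof.
by case=> _ [trF CPF] [psdA trA]; split; [exact: CP_psd | rewrite trF].
Qed.

Lemma hermitian_spectral n (A : 'M[C]_n) : adjm A = A ->
  exists (U : 'M[C]_n) (d : 'rV[R]_n), U \is unitarymx /\
    A = adjm U *m diag_mx (map_mx rc d) *m U.
Proof.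
move=> hermA; have hermsymA : A \is hermsymmx.
  by apply/is_hermitianmxP; rewrite expr0 scale1r; exact: esym hermA.
have /orthomx_spectralP defA := hermitian_normalmx hermsymA.
have /mxOverP realD := hermitian_spectral_diag_real hermsymA.
exists (spectralmx A), (map_mx (@complex.Re R) (spectral_diag A)).
split; first exact: spectral_unitarymx.
rewrite /adjm -invmx_unitary ?spectral_unitarymx //.
have -> : map_mx rc (map_mx (@complex.Re R) (spectral_diag A))
    = spectral_diag A.
  by apply/matrixP => i j; rewrite !mxE; apply: RRe_real.
exact: defA.
Qed.

Lemma psd_spectral n (A : 'M[C]_n) : psd A ->
  exists (U : 'M[C]_n) (l : 'rV[C]_n), U \is unitarymx /\
    A = adjm U *m diag_mx l *m U /\ forall x, 0 <= l 0 x.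
Proof.
case=> hermA qfA; have [U [d [unitU defA]]] := hermitian_spectral hermA.
exists U, (map_mx rc d); split => //; split => // x.
have UUt : U *m adjm U = 1%:M by apply/unitarymxP.
have := qfA (adjm U *m delta_mx x 0).
rewrite adjmM adjmK adjm_delta defA !mulmxA -(mulmxA _ U) UUt mulmx1.
by rewrite -(mulmxA _ U) UUt mulmx1 -colE -rowE !mxE eqxx mulr1n.
Qed.

Lemma psd_mxblock_scale k m (Y : 'M[C]_k) (g : 'M[C]_m) :
  psd Y -> psd g -> psd (\mxblock_(i, j) (Y i j *: g)).
Proof.
(* With g = U^* diag(l) U, the form is \sum_x l_x times the Y-form of the
   x-th coordinates of the vectors U c_i. *)
case=> hermY qfY psdg; have [U [l [_ [defg l_ge0]]]] := psd_spectral psdg.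
case: psdg => hermg _; apply/psd_mxblockP; split.
  by move=> i j; rewrite adjmZ hermg -[in RHS]hermY adjmE.
move=> c; pose b i := U *m c i.
have qf_g i j : (adjm (c i) *m (Y i j *: g) *m c j) 0 0
    = Y i j * \sum_x (b i x 0)^* * l 0 x * b j x 0.
  rewrite -scalemxAr -scalemxAl mxE defg.
  have -> : adjm (c i) *m (adjm U *m diag_mx l *m U) *m c j
      = adjm (b i) *m diag_mx l *m b j by rewrite /b adjmM !mulmxA.
  rewrite mul_mx_diag !mxE; congr (_ * _).
  by apply: eq_bigr => x _; rewrite !mxE.
have -> : \sum_i \sum_j (adjm (c i) *m (Y i j *: g) *m c j) 0 0
    = \sum_x l 0 x * (adjm (\col_i b i x 0) *m Y *m \col_i b i x 0) 0 0.
  under eq_bigr do under eq_bigr do rewrite qf_g mulr_sumr.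
  under eq_bigr do rewrite exchange_big /=.
  rewrite exchange_big /=; apply: eq_bigr => x _.
  rewrite quad_formE mulr_sumr; apply: eq_bigr => i _.
  rewrite mulr_sumr; apply: eq_bigr => j _; rewrite !mxE; ring.
by apply: sumr_ge0 => x _; apply: mulr_ge0.
Qed.

Lemma psd_mxblock_entry k m (X : 'I_k -> 'I_k -> 'M[C]_m) (a : 'I_m) :
  psd (\mxblock_(i, j) X i j) -> psd (\matrix_(i, j) X i j a a).
Proof.
case/psd_mxblockP => hermX qfX; split.
  by apply/matrixP => i j; rewrite !mxE -hermX adjmE conjCK.
move=> v; rewrite quad_formE; under eq_bigr do under eq_bigr do rewrite mxE.
have := qfX (fun i => v i 0 *: delta_mx a 0); congr (0 <= _).
by apply: eq_bigr => i _; apply: eq_bigr => j _; apply: quad_form_delta.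
Qed.

Lemma CP_prepare_entry n (g : 'M[C]_n) (a : 'I_2) :
  psd g -> CP (fun A => A a a *: g).
Proof.
move=> psdg k X /(psd_mxblock_entry a) psdY.
have := psd_mxblock_scale psdY psdg.
by congr psd; apply: eq_mxblock => i j; rewrite mxE.
Qed.

Lemma CPD n (F G : 'M[C]_2 -> 'M[C]_n) :
  CP F -> CP G -> CP (fun A => F A + G A).
Proof.
move=> CPF CPG k X psdX; rewrite mxblockD.
by apply: psdD; [apply: CPF | apply: CPG].
Qed.

Lemma rc1B (l : R) : rc (1 - l) = 1 - rc l.
Proof. exact: (rmorphB (real_complex R) 1 l). Qed.

Lemma rcM (a b : R) : rc (a * b) = rc a * rc b.
Proof. exact: (rmorphM (real_complex R) a b). Qed.

Lemma linear_comb2 m p (F : 'M[C]_m -> 'M[C]_p) (a b : C) A B : linear F ->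
  F (a *: A + b *: B) = a *: F A + b *: F B.
Proof.
move=> linF; have F0 : F 0 = 0.
  by have := linF (-1) 0 0; rewrite scaler0 addr0 scaleN1r addNr.
have FZ s X : F (s *: X) = s *: F X.
  by have := linF s X 0; rewrite !addr0 F0 addr0.
by rewrite linF FZ.
Qed.

Lemma mxtrace2 (A : 'M[C]_2) : \tr A = A 0 0 + A 1 1.
Proof.
rewrite /mxtrace big_ord_recl big_ord1.
by have -> : lift ord0 ord0 = 1 :> 'I_2 by apply: val_inj.
Qed.

Lemma density_delta m (a : 'I_m) : density (delta_mx a a : 'M[C]_m).
Proof.
split; first exact: psd_delta.
rewrite /mxtrace (bigD1 a) //= big1 => [|i /negbTE neq_ia]; rewrite mxE.
- by rewrite eqxx addr0.
- by rewrite neq_ia.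
Qed.

Definition ket0 : 'M[C]_2 := delta_mx 0 0.

Lemma piM_ket (M : R) : piM M = rc (1 - M^-1) *: ket0 + rc M^-1 *: ket1.
Proof.
apply/matrixP => i j; rewrite !mxE.
by case: i => [[|[|//]] ?]; case: j => [[|[|//]] ?];
  rewrite /= ?mulr1n ?mulr0n ?mulr0 ?mulr1 ?addr0 ?add0r.
Qed.

Definition measure_prepare n (g w : 'M[C]_n) (A : 'M[C]_2) : 'M[C]_n :=
  A 0 0 *: g + A 1 1 *: w.

Lemma CPTP_measure_prepare n (g w : 'M[C]_n) :
  density g -> density w -> CPTP (measure_prepare g w).
Proof.
move=> [psdg trg] [psdw trw]; split; [|split].
- move=> s A B; rewrite /measure_prepare !mxE !scalerDl -!scalerA scalerDr.
  by rewrite addrACA.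
- by move=> A; rewrite mxtraceD !mxtraceZ trg trw !mulr1 mxtrace2.
- exact: CPD (CP_prepare_entry 0 psdg) (CP_prepare_entry 1 psdw).
Qed.

Lemma measure_prepare_ket1 n (g w : 'M[C]_n) : measure_prepare g w ket1 = w.
Proof. by rewrite /measure_prepare !mxE /= scale0r scale1r add0r. Qed.

Lemma measure_prepare_piM n (g w : 'M[C]_n) (M : R) :
  measure_prepare g w (piM M) = rc (1 - M^-1) *: g + rc M^-1 *: w.
Proof. by rewrite /measure_prepare !mxE /= !mulr1n. Qed.

Lemma trdist_le_le n (X Y : 'M[C]_n) (D D' : R) :
  D <= D' -> trdist_le X Y D -> trdist_le X Y D'.
Proof.
move=> le_DD' [U [d [unitU [defXY le_D]]]].
by exists U, d; do 2!split=> //; apply: le_trans le_DD'.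
Qed.

Lemma trdist_le_density n (X Y : 'M[C]_n) :
  density X -> density Y -> exists2 D, 0 <= D & trdist_le X Y D.
Proof.
move=> [[hermX _] _] [[hermY _] _].
have /hermitian_spectral [U [d [unitU defXY]]] : adjm (X - Y) = X - Y.
  by rewrite adjmB hermX hermY.
by exists ((\sum_i `|d 0 i|) / 2); [rewrite divr_ge0 ?sumr_ge0 | exists U, d].
Qed.

Lemma trdist_le_mix n (g w : 'M[C]_n) (D l : R) : 0 <= l -> trdist_le g w D ->
  trdist_le g (rc (1 - l) *: g + rc l *: w) (l * D).
Proof.
move=> l_ge0 [U [d [unitU [defgw le_D]]]]; exists U, (l *: d); do 2!split=> //.
- have -> : g - (rc (1 - l) *: g + rc l *: w) = rc l *: (g - w).
    rewrite rc1B scalerBl scale1r scalerBr opprD opprB addrA.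
    by rewrite [g + _]addrC subrK.
  rewrite defgw scalemxAl scalemxAr; congr (_ *m _ *m _).
  by apply/matrixP => i j; rewrite !mxE rcM mulrnAr.
- under eq_bigr do rewrite mxE normrM (ger0_norm l_ge0).
  by rewrite -mulr_sumr -mulrA ler_wpM2l.
Qed.

Lemma dcl_mix n (K : set 'M[C]_n) (g w : 'M[C]_n) (l0 : R) :
  density g -> density w -> 0 < l0 ->
  (forall l, 0 < l <= l0 -> K (rc (1 - l) *: g + rc l *: w)) -> dcl K g.
Proof.
move=> dg dw l0_gt0 K_mix; split => // d d_gt0.
have [D D_ge0 gwD] := trdist_le_density dg dw.
pose l := Order.min l0 (d / (D + 1)).
have l_gt0 : 0 < l by rewrite lt_min l0_gt0 divr_gt0 // ltr_wpDl.
have l_le_d : l * (D + 1) <= d.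
  by rewrite -ler_pdivlMr ?ltr_wpDl // ge_min lexx orbT.
exists (rc (1 - l) *: g + rc l *: w); split.
  by apply: K_mix; rewrite l_gt0 ge_min lexx.
by apply: trdist_le_le (trdist_le_mix (ltW l_gt0) gwD); nra.
Qed.

Definition gpo_feasible n (Pset Eset : set 'M[C]_n) (e M : R) : Prop :=
  1 < M /\ exists F : 'M[C]_2 -> 'M[C]_n, CPTP F /\
    (exists r, Pset r /\ trdist_le (F ket1) r e) /\
    (forall M' : R, M <= M' -> Eset (F (piM M'))).

Definition dmax_feasible n (K Pset Eset : set 'M[C]_n) (e M : R) : Prop :=
  1 < M /\ exists g w, dcl K g /\ eps_ball Pset e w /\
    (forall l : R, 0 < l <= M^-1 -> Eset (rc (1 - l) *: g + rc l *: w)).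

Lemma dmax_feasible_gpo n (K Pset Eset : set 'M[C]_n) (e M : R) :
  dmax_feasible K Pset Eset e M -> gpo_feasible Pset Eset e M.
Proof.
case=> M_gt1 [g [w [[dg _] [[dw Pw] cone]]]]; split => //.
exists (measure_prepare g w); split; first exact: CPTP_measure_prepare.
split; first by rewrite measure_prepare_ket1.
move=> M' le_MM'; rewrite measure_prepare_piM; apply: cone.
have M_gt0 : 0 < M by apply: lt_trans M_gt1.
have M'_gt0 : 0 < M' by apply: lt_le_trans le_MM'.
by rewrite invr_gt0 M'_gt0 lef_pV2 ?posrE.
Qed.

Lemma gpo_feasible_dmax n (Pset Eset : set 'M[C]_n) (e M : R) :
  gpo_feasible Pset Eset e M -> dmax_feasible Eset Pset Eset e M.
Proof.
case=> M_gt1 [F [CPTP_F [[r [Pr Fr]] E_F]]]; split => //.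
have M_gt0 : 0 < M by apply: lt_trans M_gt1.
pose g := F ket0; pose w := F ket1.
have dg : density g := CPTP_density CPTP_F (density_delta 0).
have dw : density w := CPTP_density CPTP_F (density_delta 1).
have F_piM M' : F (piM M') = rc (1 - M'^-1) *: g + rc M'^-1 *: w.
  by rewrite piM_ket linear_comb2 //; case: CPTP_F.
have cone l : 0 < l <= M^-1 -> Eset (rc (1 - l) *: g + rc l *: w).
  case/andP => l_gt0 l_le; rewrite -[l]invrK -F_piM.
  by apply: E_F; rewrite -lef_pV2 ?posrE ?invr_gt0 // invrK.
exists g, w; split; first by apply: dcl_mix dg dw _ cone; rewrite invr_gt0.
by split => //; split => //; exists r.
Qed.

End GPOWorkCost.

Theorem theorem7 (R : realType) (n : nat) (e : R)
  (Pset Eset : set 'M[R[i]]_n) :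
  0 <= e < 1 ->
  Pset `<=` density -> Eset `<=` density ->
  work_cost_GPO Pset Eset e = Dmax_K Eset Pset Eset e.
Proof.
move=> _ _ _; congr log_inf; apply/seteqP; split => M.
- exact: gpo_feasible_dmax.
- exact: dmax_feasible_gpo.
Qed.
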